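(* Let $\tau\in F_2$ and let $a=(0,0)$, $b\in\{0,\tfrac12\}^2$. Then $$|\theta_{a,b}(0,\tau)|\ge 2-\Big(1+\Big(2+\frac{\sqrt2}{\sqrt{\operatorname{Im}\tau_1}}\Big)e^{-\pi\operatorname{Im}\tau_1/2}\Big)\Big(1+\Big(2+\frac{\sqrt2}{\sqrt{\operatorname{Im}\tau_2}}\Big)e^{-\pi\operatorname{Im}\tau_2/2}\Big),$$ and this lower bound is positive when $\operatorname{Im}\tau_1\ge 2$.
   Context: $F_2$ is the standard Siegel fundamental domain for $\mathrm{Sp}_4(\mathbb{Z})$ acting on symmetric complex $2\times2$ matrices $\tau=\begin{pmatrix}\tau_1&\tau_{12}\\ \tau_{12}&\tau_2\end{pmatrix}$ with $\operatorname{Im}\tau>0$; every $\tau\in F_2$ satisfies $|\operatorname{Re}\tau_{ij}|\le 1/2$, $\operatorname{Im}\tau_2\ge\operatorname{Im}\tau_1\ge 2\operatorname{Im}\tau_{12}\ge 0$, $\operatorname{Im}\tau_1\ge\sqrt3/2$. $\theta_{a,b}(Z,\tau)=\sum_{n\in\mathbb{Z}^2}\exp\big(2i\pi(\tfrac12{}^t(n+a)\tau(n+a)+{}^t(n+a)(Z+b))\big)$. *)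

From Stdlib Require Export Reals ZArith List.
Open Scope R_scope.

(** A point tau = X + i Y of the Siegel upper half space of degree 2, with
    X = [[x1, x12],[x12, x2]] and Y = [[y1, y12],[y12, y2]] (symmetric). *)
Record Siegel2 := mkSiegel2 {
  x1 : R; x12 : R; x2 : R;
  y1 : R; y12 : R; y2 : R }.

Definition in_H2 (t : Siegel2) : Prop :=
  0 < y1 t /\ 0 < y1 t * y2 t - y12 t * y12 t.

(** 2x2 integer matrices and Sp_4(Z) = { [[A,B],[C,D]] : M^T J M = J },
    written as A^T C, B^T D symmetric and A^T D - C^T B = I. *)
Record M2Z := mkM2Z { e11 : Z; e12 : Z; e21 : Z; e22 : Z }.

Definition tr2 (M : M2Z) : M2Z := mkM2Z (e11 M) (e21 M) (e12 M) (e22 M).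
Definition mul2 (M N : M2Z) : M2Z :=
  mkM2Z (e11 M * e11 N + e12 M * e21 N)%Z (e11 M * e12 N + e12 M * e22 N)%Z
        (e21 M * e11 N + e22 M * e21 N)%Z (e21 M * e12 N + e22 M * e22 N)%Z.
Definition sym2 (M : M2Z) : Prop := e12 M = e21 M.

Definition is_Sp4Z (A B C D : M2Z) : Prop :=
  sym2 (mul2 (tr2 A) C) /\ sym2 (mul2 (tr2 B) D) /\
  (e11 (mul2 (tr2 A) D) - e11 (mul2 (tr2 C) B) = 1)%Z /\
  (e12 (mul2 (tr2 A) D) - e12 (mul2 (tr2 C) B) = 0)%Z /\
  (e21 (mul2 (tr2 A) D) - e21 (mul2 (tr2 C) B) = 0)%Z /\
  (e22 (mul2 (tr2 A) D) - e22 (mul2 (tr2 C) B) = 1)%Z.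

(** |det(C tau + D)|^2, where C tau + D = P + i Q with P = C X + D, Q = C Y. *)
Definition det_CtauD_norm2 (C D : M2Z) (t : Siegel2) : R :=
  let c11 := IZR (e11 C) in let c12 := IZR (e12 C) in
  let c21 := IZR (e21 C) in let c22 := IZR (e22 C) in
  let p11 := c11 * x1 t + c12 * x12 t + IZR (e11 D) in
  let p12 := c11 * x12 t + c12 * x2 t + IZR (e12 D) in
  let p21 := c21 * x1 t + c22 * x12 t + IZR (e21 D) in
  let p22 := c21 * x12 t + c22 * x2 t + IZR (e22 D) in
  let q11 := c11 * y1 t + c12 * y12 t in
  let q12 := c11 * y12 t + c12 * y2 t in
  let q21 := c21 * y1 t + c22 * y12 t in
  let q22 := c21 * y12 t + c22 * y2 t in
  let re := p11 * p22 - q11 * q22 - (p12 * p21 - q12 * q21) in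
  let im := p11 * q22 + q11 * p22 - (p12 * q21 + q12 * p21) in
  re * re + im * im.

Definition in_F2 (t : Siegel2) : Prop :=
  in_H2 t /\
  Rabs (x1 t) <= 1/2 /\ Rabs (x12 t) <= 1/2 /\ Rabs (x2 t) <= 1/2 /\
  (* Minkowski reduction of Y *)
  0 <= 2 * y12 t /\ 2 * y12 t <= y1 t /\ y1 t <= y2 t /\
  (* maximal height: |det(C tau + D)| >= 1 for all symplectic matrices *)
  (forall A B C D : M2Z, is_Sp4Z A B C D -> 1 <= det_CtauD_norm2 C D t).

(** Term of the theta series for n = (n1,n2), characteristics a = (a1,a2),
    b = (b1,b2) and Z = (zr1 + i zi1, zr2 + i zi2):
    exp(2 i pi (1/2 m^T tau m + m^T (Z + b))) with m = n + a,
    returned as (real part, imaginary part). *)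
Definition theta_term (a1 a2 b1 b2 zr1 zi1 zr2 zi2 : R) (t : Siegel2)
  (n1 n2 : Z) : R * R :=
  let m1 := IZR n1 + a1 in let m2 := IZR n2 + a2 in
  let phase := / 2 * (x1 t * m1 * m1 + 2 * x12 t * m1 * m2 + x2 t * m2 * m2)
               + m1 * (zr1 + b1) + m2 * (zr2 + b2) in
  let modulus := exp (- PI * (y1 t * m1 * m1 + 2 * y12 t * m1 * m2 + y2 t * m2 * m2)
                      - 2 * PI * (m1 * zi1 + m2 * zi2)) in
  (modulus * cos (2 * PI * phase), modulus * sin (2 * PI * phase)).

Definition zrange (N : nat) : list Z :=
  map (fun k => (Z.of_nat k - Z.of_nat N)%Z) (seq 0 (2 * N + 1)).

Definition sumR (l : list R) : R := fold_right Rplus 0 l.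

Definition theta_partial (a1 a2 b1 b2 zr1 zi1 zr2 zi2 : R) (t : Siegel2)
  (N : nat) : R * R :=
  (sumR (map (fun n1 => sumR (map (fun n2 =>
      fst (theta_term a1 a2 b1 b2 zr1 zi1 zr2 zi2 t n1 n2)) (zrange N))) (zrange N)),
   sumR (map (fun n1 => sumR (map (fun n2 =>
      snd (theta_term a1 a2 b1 b2 zr1 zi1 zr2 zi2 t n1 n2)) (zrange N))) (zrange N))).

(** [is_theta a1 a2 b1 b2 zr1 zi1 zr2 zi2 t re im] : theta_{a,b}(Z,tau) = re + i im
    (the series is absolutely convergent on H_2, so its value is the limit of
    the square partial sums). *)
Definition is_theta (a1 a2 b1 b2 zr1 zi1 zr2 zi2 : R) (t : Siegel2) (re im : R) : Prop :=
  Un_cv (fun N => fst (theta_partial a1 a2 b1 b2 zr1 zi1 zr2 zi2 t N)) re /\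
  Un_cv (fun N => snd (theta_partial a1 a2 b1 b2 zr1 zi1 zr2 zi2 t N)) im.

Definition theta_lower_bound (t : Siegel2) : R :=
  2 - (1 + (2 + sqrt 2 / sqrt (y1 t)) * exp (- PI * y1 t / 2))
    * (1 + (2 + sqrt 2 / sqrt (y2 t)) * exp (- PI * y2 t / 2)).

From Stdlib Require Import Reals Lra Lia Psatz.
Open Scope R_scope.

(** Each term of the series has modulus exp(-pi m^T Y m), and for the
    Minkowski-reduced Y of a point of F_2 (0 <= 2 y12 <= y1 <= y2) one has
    m^T Y m >= (y1 m1^2 + y2 m2^2)/2.  Hence the terms are dominated by the
    product of the one-variable Gaussians n |-> exp(-c n^2) with c = pi y_i/2,
    whose symmetric sums are bounded through a geometric series by
    1 + (2 + sqrt 2/sqrt y) exp(-pi y/2) as soon as y >= 1/2.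

    Applied to the real part of theta, where both values
    at the origin are 1, this gives 2 - K <= Re theta <= |theta|.  The
    hypothesis Im tau1 >= 1/2 comes from |tau1| >= 1 on F_2, and positivity of
    the bound for Im tau1 >= 2 from the estimate 1 <= factor <= 11/8 there. *)

Lemma sumR_map_plus (g h : Z -> R) (l : list Z) :
  sumR (map (fun x => g x + h x) l) = sumR (map g l) + sumR (map h l).
Proof. induction l as [|x l IH]; simpl; lra. Qed.

Lemma sumR_map_scal (g : Z -> R) (c : R) (l : list Z) :
  sumR (map (fun x => c * g x) l) = c * sumR (map g l).
Proof. induction l as [|x l IH]; simpl; lra. Qed.

Lemma sumR_map_le (g h : Z -> R) (l : list Z) :
  (forall x, g x <= h x) -> sumR (map g l) <= sumR (map h l).
Proof. intro Hgh; induction l as [|x l IH]; simpl; [lra|]. specialize (Hgh x); lra. Qed.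

Lemma sumR_map_nonneg (g : Z -> R) (l : list Z) :
  (forall x, 0 <= g x) -> 0 <= sumR (map g l).
Proof. intro Hg; induction l as [|x l IH]; simpl; [lra|]. specialize (Hg x); lra. Qed.

Lemma sumR_app (l1 l2 : list R) : sumR (l1 ++ l2) = sumR l1 + sumR l2.
Proof. induction l1 as [|x l IH]; simpl; lra. Qed.

Definition sym_sum (g : Z -> R) (N : nat) : R := sumR (map g (zrange N)).

Lemma sym_sum_0 (g : Z -> R) : sym_sum g 0 = g 0%Z.
Proof. unfold sym_sum, zrange; simpl; lra. Qed.

Lemma sym_sum_S (g : Z -> R) (N : nat) :
  sym_sum g (S N) = g (- Z.of_nat (S N))%Z + sym_sum g N + g (Z.of_nat (S N)).
Proof.
  unfold sym_sum, zrange.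
  replace (2 * S N + 1)%nat with (S (S (2 * N + 1))) by lia.
  rewrite <- cons_seq, (seq_S (2 * N + 1) 1), <- seq_shift.
  rewrite !map_cons, !map_app, !map_map, !map_cons.
  change (sumR (?x :: ?l)) with (x + sumR l); rewrite sumR_app.
  rewrite (map_ext (fun x => g (Z.of_nat (S x) - Z.of_nat (S N))%Z)
             (fun k => g (Z.of_nat k - Z.of_nat N)%Z)) by (intro k; f_equal; lia).
  replace (Z.of_nat 0 - Z.of_nat (S N))%Z with (- Z.of_nat (S N))%Z by lia.
  replace (Z.of_nat (1 + (2 * N + 1)) - Z.of_nat (S N))%Z with (Z.of_nat (S N)) by lia.
  change (sumR (?x :: ?l)) with (x + sumR l); change (sumR (map _ nil)) with 0; lra.
Qed.

Lemma sym_sum_le (g h : Z -> R) (N : nat) :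
  (forall x, g x <= h x) -> sym_sum g N <= sym_sum h N.
Proof. apply sumR_map_le. Qed.

Lemma sym_sum_nonneg (g : Z -> R) (N : nat) :
  (forall x, 0 <= g x) -> 0 <= sym_sum g N.
Proof. apply sumR_map_nonneg. Qed.

Lemma sym_sum_incr (g : Z -> R) (N : nat) :
  (forall x, 0 <= g x) -> sym_sum g N <= sym_sum g (S N).
Proof.
  intro Hg. rewrite sym_sum_S.
  pose proof (Hg (- Z.of_nat (S N))%Z); pose proof (Hg (Z.of_nat (S N))); lra.
Qed.

Definition square_sum (f : Z -> Z -> R) (N : nat) : R :=
  sym_sum (fun n1 => sym_sum (f n1) N) N.

Lemma square_sum_0 (f : Z -> Z -> R) : square_sum f 0 = f 0%Z 0%Z.
Proof. unfold square_sum; rewrite !sym_sum_0; reflexivity. Qed.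

Lemma square_sum_plus (f g : Z -> Z -> R) (N : nat) :
  square_sum (fun n1 n2 => f n1 n2 + g n1 n2) N = square_sum f N + square_sum g N.
Proof.
  unfold square_sum, sym_sum. rewrite <- sumR_map_plus.
  f_equal; apply map_ext; intro n1; apply sumR_map_plus.
Qed.

Lemma square_sum_tensor (g h : Z -> R) (N : nat) :
  square_sum (fun n1 n2 => g n1 * h n2) N = sym_sum g N * sym_sum h N.
Proof.
  unfold square_sum, sym_sum.
  rewrite (map_ext _ (fun n1 => sumR (map h (zrange N)) * g n1))
    by (intro n1; rewrite sumR_map_scal; ring).
  rewrite sumR_map_scal; ring.
Qed.

Lemma square_sum_incr (f : Z -> Z -> R) (N : nat) :
  (forall x y, 0 <= f x y) -> square_sum f N <= square_sum f (S N).
Proof.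
  intro Hf. unfold square_sum.
  apply Rle_trans with (sym_sum (fun n1 => sym_sum (f n1) N) (S N)).
  - apply sym_sum_incr; intro; apply sym_sum_nonneg; auto.
  - apply sym_sum_le; intro; apply sym_sum_incr; auto.
Qed.

Lemma square_sum_nonneg_cv (f : Z -> Z -> R) (K : R) :
  (forall x y, 0 <= f x y) -> (forall N, square_sum f N <= K) ->
  {l : R | Un_cv (square_sum f) l}.
Proof.
  intros Hf HK. apply growing_cv.
  - intro N; apply square_sum_incr; exact Hf.
  - exists K; intros r [N ->]; apply HK.
Qed.

Section Dominated.
Variables (f F : Z -> Z -> R) (K : R).
Hypothesis f_dominated : forall x y, Rabs (f x y) <= F x y.
Hypothesis F_sums_bounded : forall N, square_sum F N <= K.

Let f_plus_F_nonneg : forall x y, 0 <= f x y + F x y.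
Proof.
  intros x y; pose proof (f_dominated x y); pose proof (Rle_abs (- f x y)).
  rewrite Rabs_Ropp in *; lra.
Qed.

Let F_nonneg : forall x y, 0 <= F x y.
Proof. intros x y; pose proof (f_dominated x y); pose proof (Rabs_pos (f x y)); lra. Qed.

Let f_square_sum_eq (N : nat) :
  square_sum f N = square_sum (fun x y => f x y + F x y) N - square_sum F N.
Proof. rewrite square_sum_plus; ring. Qed.

Let f_sum_le_F_sum (N : nat) : square_sum f N <= square_sum F N.
Proof.
  unfold square_sum; apply sym_sum_le; intro x; apply sym_sum_le; intro y.
  pose proof (Rle_abs (f x y)); pose proof (f_dominated x y); lra.
Qed.

(* The square sums of f are the difference of those of f + F and of F, both
   nondecreasing and bounded. *)
Lemma square_sum_dominated_cv : {l : R | Un_cv (square_sum f) l}.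
Proof.
  assert (Hsum : forall N, square_sum (fun x y => f x y + F x y) N <= K + K).
  { intro N. rewrite square_sum_plus. pose proof (f_sum_le_F_sum N).
    pose proof (F_sums_bounded N). lra. }
  destruct (square_sum_nonneg_cv _ _ f_plus_F_nonneg Hsum) as [l1 H1].
  destruct (square_sum_nonneg_cv _ _ F_nonneg F_sums_bounded) as [l2 H2].
  exists (l1 - l2).
  apply Un_cv_ext with (fun N => square_sum (fun x y => f x y + F x y) N - square_sum F N).
  - intro N; symmetry; apply f_square_sum_eq.
  - apply CV_minus; assumption.
Qed.

(* Lower bound by monotonicity of the square sums of f + F. *)
Lemma square_sum_dominated_lower (N : nat) :
  f 0%Z 0%Z + F 0%Z 0%Z - K <= square_sum f N.
Proof.
  rewrite f_square_sum_eq.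
  assert (Hmono : f 0%Z 0%Z + F 0%Z 0%Z <= square_sum (fun x y => f x y + F x y) N).
  { rewrite <- (square_sum_0 (fun x y => f x y + F x y)).
    induction N as [|N IH]; [lra|].
    eapply Rle_trans; [exact IH|]. apply square_sum_incr; exact f_plus_F_nonneg. }
  pose proof (F_sums_bounded N); lra.
Qed.

End Dominated.

Lemma Un_cv_lower_bound (u : nat -> R) (l a : R) :
  Un_cv u l -> (forall N, a <= u N) -> a <= l.
Proof.
  intros Hu Ha. destruct (Rle_or_lt a l) as [h|h]; [exact h|].
  destruct (Hu (a - l)) as [N HN]; [lra|]. specialize (HN N (le_n N)). specialize (Ha N).
  unfold Rdist in HN. apply Rabs_def2 in HN. lra.
Qed.

Definition gauss (c : R) (n : Z) : R := exp (- (c * (IZR n * IZR n))).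

Lemma exp_le (x y : R) : x <= y -> exp x <= exp y.
Proof.
  intros [Hlt|Heq]; [left; apply exp_increasing; exact Hlt | rewrite Heq; lra].
Qed.

(* Since (N+1)^2 >= 1 + 3N, the tail of the Gaussian sum is dominated by a
   geometric series of ratio r = exp(-3c); finite-N form for the induction. *)
Lemma gauss_sum_geometric_partial (c : R) (N : nat) : 0 < c ->
  sym_sum (gauss c) N
  <= 1 + 2 * exp (- c) * ((1 - exp (- (3 * c) * INR N)) / (1 - exp (- (3 * c)))).
Proof.
  intro Hc.
  assert (Hr : exp (- (3 * c)) < 1) by (rewrite <- exp_0; apply exp_increasing; lra).
  induction N as [|N IH].
  - rewrite sym_sum_0. unfold gauss. simpl INR.
    rewrite Rmult_0_l, Rmult_0_r, Ropp_0, Rmult_0_r, exp_0. unfold Rdiv. lra.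
  - rewrite sym_sum_S.
    assert (Hsym : gauss c (- Z.of_nat (S N))%Z = gauss c (Z.of_nat (S N))).
    { unfold gauss. rewrite opp_IZR. f_equal. ring. }
    assert (Hterm : gauss c (Z.of_nat (S N)) <= exp (- c) * exp (- (3 * c) * INR N)).
    { unfold gauss. rewrite <- exp_plus, <- INR_IZR_INZ, S_INR. apply exp_le.
      assert (0 <= INR N * (INR N - 1)).
      { destruct N as [|N']; [simpl; lra|]. rewrite S_INR. pose proof (pos_INR N'). nra. }
      nra. }
    assert (Hstep : exp (- (3 * c) * INR (S N)) = exp (- (3 * c) * INR N) * exp (- (3 * c))).
    { rewrite <- exp_plus, S_INR. f_equal. ring. }
    rewrite Hsym, Hstep.
    set (x := exp (- (3 * c) * INR N)) in *. set (r := exp (- (3 * c))) in *.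
    assert (Hgeom : (1 - x * r) / (1 - r) = (1 - x) / (1 - r) + x) by (field; lra).
    rewrite Hgeom. lra.
Qed.

(* Uniform in N: the factor 1 - exp(-3cN) of the partial bound is at most 1. *)
Lemma gauss_sum_geometric (c : R) (N : nat) : 0 < c ->
  sym_sum (gauss c) N <= 1 + exp (- c) * (2 / (1 - exp (- (3 * c)))).
Proof.
  intro Hc.
  assert (Hr : exp (- (3 * c)) < 1) by (rewrite <- exp_0; apply exp_increasing; lra).
  assert (Hx : 0 < exp (- (3 * c) * INR N)) by apply exp_pos.
  pose proof (exp_pos (- c)).
  eapply Rle_trans; [apply gauss_sum_geometric_partial; exact Hc|].
  apply Rplus_le_compat_l.
  replace (2 * exp (- c) * ((1 - exp (- (3 * c) * INR N)) / (1 - exp (- (3 * c)))))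
    with (exp (- c) * (2 / (1 - exp (- (3 * c)))) * (1 - exp (- (3 * c) * INR N)))
    by (field; lra).
  assert (Ha : 0 < exp (- c) * (2 / (1 - exp (- (3 * c)))))
    by (apply Rmult_lt_0_compat; [lra | apply Rdiv_lt_0_compat; lra]).
  set (a := exp (- c) * (2 / (1 - exp (- (3 * c))))) in *. nra.
Qed.

(* With c = pi y / 2 and y >= 1/2: 2/(1 - e^{-3c}) <= 2 + 2/(3c) <= 2 + 1/y,
   and 1/y <= sqrt(2/y) because 2y >= 1. *)
Lemma geometric_factor_bound (y : R) : 1/2 <= y ->
  2 / (1 - exp (- (3 * (PI * y / 2)))) <= 2 + sqrt 2 / sqrt y.
Proof.
  intro Hy. pose proof PI2_3_2 as Hpi.
  set (c := PI * y / 2).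
  assert (Hc : 3 * c >= 2 * y) by (unfold c; nra).
  assert (HR : 1 + 3 * c <= exp (3 * c)) by apply exp_ineq1_le.
  assert (Hinv_y : 1 / y <= sqrt 2 / sqrt y).
  { assert (Hsy : 0 < sqrt y) by (apply sqrt_lt_R0; lra).
    assert (H1 : 1 <= sqrt 2 * sqrt y).
    { rewrite <- sqrt_mult, <- sqrt_1 by lra. apply sqrt_le_1_alt; lra. }
    assert (Hyy : sqrt y * sqrt y = y) by (apply sqrt_sqrt; lra).
    apply (Rmult_le_reg_r y); [lra|].
    replace (1 / y * y) with 1 by (field; lra).
    rewrite <- Hyy at 2.
    replace (sqrt 2 / sqrt y * (sqrt y * sqrt y)) with (sqrt 2 * sqrt y) by (field; lra).
    exact H1. }
  rewrite exp_Ropp.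
  set (R3 := exp (3 * c)) in *.
  replace (2 / (1 - / R3)) with (2 + 2 / (R3 - 1)) by (field; lra).
  apply Rplus_le_compat_l. eapply Rle_trans; [|exact Hinv_y].
  apply (Rmult_le_reg_r ((R3 - 1) * y)); [apply Rmult_lt_0_compat; lra|].
  replace (2 / (R3 - 1) * ((R3 - 1) * y)) with (2 * y) by (field; lra).
  replace (1 / y * ((R3 - 1) * y)) with (R3 - 1) by (field; lra).
  lra.
Qed.

Definition theta_factor (y : R) : R := 1 + (2 + sqrt 2 / sqrt y) * exp (- PI * y / 2).

Lemma gauss_sum_bound (y : R) (N : nat) : 1/2 <= y ->
  sym_sum (gauss (PI * y / 2)) N <= theta_factor y.
Proof.
  intro Hy. pose proof PI_RGT_0.
  eapply Rle_trans; [apply gauss_sum_geometric; nra|].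
  unfold theta_factor. apply Rplus_le_compat_l.
  replace (- PI * y / 2) with (- (PI * y / 2)) by field.
  rewrite Rmult_comm. apply Rmult_le_compat_r; [left; apply exp_pos|].
  apply geometric_factor_bound; exact Hy.
Qed.

(* For Minkowski-reduced Y (0 <= 2 y12 <= y1 <= y2) the quadratic form m^T Y m
   dominates half of its diagonal part:
   m^T Y m - (y1 m1^2 + y2 m2^2)/2
     = y12 (m1+m2)^2 + (y1/2 - y12)(m1^2 + m2^2) + (y2 - y1)/2 m2^2. *)
Lemma reduced_form_lower_bound (y1 y12 y2 m1 m2 : R) :
  0 <= 2 * y12 -> 2 * y12 <= y1 -> y1 <= y2 ->
  (y1 * (m1 * m1) + y2 * (m2 * m2)) / 2 <= y1 * m1 * m1 + 2 * y12 * m1 * m2 + y2 * m2 * m2.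
Proof.
  intros H12 H1 H2.
  pose proof (Rle_0_sqr (m1 + m2)); pose proof (Rle_0_sqr m1); pose proof (Rle_0_sqr m2).
  unfold Rsqr in *.
  assert (0 <= y12 * ((m1 + m2) * (m1 + m2))) by (apply Rmult_le_pos; lra).
  assert (0 <= (y1 / 2 - y12) * (m1 * m1 + m2 * m2)) by (apply Rmult_le_pos; lra).
  assert (0 <= (y2 - y1) / 2 * (m2 * m2)) by (apply Rmult_le_pos; lra).
  lra.
Qed.

Lemma polar_bound (M phi B : R) : 0 <= M <= B ->
  Rabs (M * cos phi) <= B /\ Rabs (M * sin phi) <= B.
Proof.
  intros [HM HB]. rewrite !Rabs_mult, (Rabs_pos_eq M HM).
  assert (Hc : Rabs (cos phi) <= 1) by (apply Rabs_le; apply COS_bound).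
  assert (Hs : Rabs (sin phi) <= 1) by (apply Rabs_le; apply SIN_bound).
  pose proof (Rabs_pos (cos phi)); pose proof (Rabs_pos (sin phi)).
  split; nra.
Qed.

Definition theta_majorant (t : Siegel2) (n1 n2 : Z) : R :=
  gauss (PI * y1 t / 2) n1 * gauss (PI * y2 t / 2) n2.

Lemma theta_term_bound (t : Siegel2) (b1 b2 : R) (n1 n2 : Z) :
  0 <= 2 * y12 t -> 2 * y12 t <= y1 t -> y1 t <= y2 t ->
  Rabs (fst (theta_term 0 0 b1 b2 0 0 0 0 t n1 n2)) <= theta_majorant t n1 n2 /\
  Rabs (snd (theta_term 0 0 b1 b2 0 0 0 0 t n1 n2)) <= theta_majorant t n1 n2.
Proof.
  intros H12 H1 H2. unfold theta_term, theta_majorant, gauss. cbv zeta. cbn [fst snd].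
  apply polar_bound. split; [left; apply exp_pos|].
  rewrite <- exp_plus. apply exp_le.
  pose proof PI_RGT_0.
  pose proof (reduced_form_lower_bound (y1 t) (y12 t) (y2 t) (IZR n1 + 0) (IZR n2 + 0) H12 H1 H2).
  rewrite !Rplus_0_r in *. nra.
Qed.

Lemma theta_majorant_sum_bound (t : Siegel2) (N : nat) :
  1/2 <= y1 t -> y1 t <= y2 t ->
  square_sum (theta_majorant t) N <= theta_factor (y1 t) * theta_factor (y2 t).
Proof.
  intros H1 H2. unfold theta_majorant. rewrite square_sum_tensor.
  apply Rmult_le_compat; try (apply sym_sum_nonneg; intro; left; apply exp_pos);
    apply gauss_sum_bound; lra.
Qed.

(* The maximal-height condition of F_2 applied to the symplectic matrix
   acting on tau1 as tau1 -> -1/tau1 gives |tau1| >= 1; with |Re tau1| <= 1/2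
   this forces Im tau1 >= sqrt 3 / 2 > 1/2. *)
Lemma F2_im_tau1_lower (t : Siegel2) : in_F2 t -> 1/2 <= y1 t.
Proof.
  intros [[Hy1_pos _] [Hx1 [_ [_ [_ [_ [_ Hheight]]]]]]].
  assert (Hsp : is_Sp4Z (mkM2Z 0 0 0 1) (mkM2Z (-1) 0 0 0) (mkM2Z 1 0 0 0) (mkM2Z 0 0 0 1))
    by (unfold is_Sp4Z, sym2; vm_compute; repeat split; reflexivity).
  specialize (Hheight _ _ _ _ Hsp). unfold det_CtauD_norm2 in Hheight.
  cbn [e11 e12 e21 e22] in Hheight.
  assert (x1 t * x1 t <= 1/4).
  { pose proof (Rsqr_abs (x1 t)) as Hsq; unfold Rsqr in Hsq. rewrite Hsq.
    pose proof (Rabs_pos (x1 t)). nra. }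
  nra.
Qed.

(* For y >= 2: exp(-pi y/2) <= exp(-pi) <= 1/8 and sqrt 2/sqrt y <= 1. *)
Lemma theta_factor_small (y : R) : 2 <= y -> 1 <= theta_factor y <= 11/8.
Proof.
  intro Hy. unfold theta_factor. pose proof PI2_3_2.
  assert (He3 : exp (- PI) <= / 8).
  { rewrite exp_Ropp. apply Rinv_le_contravar; [lra|].
    assert (exp 1 >= 2) by (pose proof (exp_ineq1_le 1); lra).
    assert (exp 3 = exp 1 * exp 1 * exp 1) by (rewrite <- !exp_plus; f_equal; ring).
    assert (exp 3 <= exp PI) by (apply exp_le; lra). nra. }
  assert (Hsy : 0 < sqrt y) by (apply sqrt_lt_R0; lra).
  assert (H2y : sqrt 2 <= sqrt y) by (apply sqrt_le_1_alt; lra).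
  assert (Hratio : 0 <= sqrt 2 / sqrt y <= 1).
  { split; [apply Rle_mult_inv_pos; [apply sqrt_pos | lra]|].
    apply (Rmult_le_reg_r (sqrt y)); [lra|].
    unfold Rdiv. rewrite Rmult_assoc, Rinv_l; lra. }
  assert (exp (- PI * y / 2) <= exp (- PI)) by (apply exp_le; nra).
  pose proof (exp_pos (- PI * y / 2)). split; nra.
Qed.

Lemma theta_term_origin (b1 b2 : R) (t : Siegel2) :
  fst (theta_term 0 0 b1 b2 0 0 0 0 t 0 0) = 1.
Proof.
  unfold theta_term; cbn [fst].
  match goal with |- exp ?a * cos ?b = 1 => replace a with 0 by ring; replace b with 0 by ring end.
  rewrite exp_0, cos_0; ring.
Qed.

Lemma theta_majorant_origin (t : Siegel2) : theta_majorant t 0 0 = 1.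
Proof. unfold theta_majorant, gauss. rewrite !Rmult_0_r, Ropp_0, exp_0; ring. Qed.

Lemma le_complex_modulus (re im : R) : re <= sqrt (re * re + im * im).
Proof.
  eapply Rle_trans; [apply Rle_abs|].
  rewrite <- sqrt_Rsqr_abs. apply sqrt_le_1_alt. unfold Rsqr.
  pose proof (Rle_0_sqr im). unfold Rsqr in *. lra.
Qed.

Theorem mainTheorem13 (t : Siegel2) (b1 b2 : R)
  (Ht : in_F2 t) (Hb1 : b1 = 0 \/ b1 = 1/2) (Hb2 : b2 = 0 \/ b2 = 1/2) :
  (exists re im : R,
     is_theta 0 0 b1 b2 0 0 0 0 t re im /\
     theta_lower_bound t <= sqrt (re * re + im * im)) /\
  (2 <= y1 t -> 0 < theta_lower_bound t).
Proof.
  pose proof (F2_im_tau1_lower t Ht) as Hy1.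
  destruct Ht as [_ [_ [_ [_ [Hy12 [Hy12y1 [Hy1y2 _]]]]]]].
  change (theta_lower_bound t) with (2 - theta_factor (y1 t) * theta_factor (y2 t)).
  set (K := theta_factor (y1 t) * theta_factor (y2 t)).
  assert (HK : forall N, square_sum (theta_majorant t) N <= K)
    by (intro N; apply theta_majorant_sum_bound; assumption).
  pose proof (fun n1 n2 => theta_term_bound t b1 b2 n1 n2 Hy12 Hy12y1 Hy1y2) as Hdom.
  split.
  - destruct (square_sum_dominated_cv _ _ _ (fun n1 n2 => proj1 (Hdom n1 n2)) HK) as [re Hre].
    destruct (square_sum_dominated_cv _ _ _ (fun n1 n2 => proj2 (Hdom n1 n2)) HK) as [im Him].
    exists re, im. split; [split; assumption|].
    apply Rle_trans with re; [|apply le_complex_modulus].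
    apply (Un_cv_lower_bound _ _ _ Hre). intro N.
    pose proof (square_sum_dominated_lower _ _ _ (fun n1 n2 => proj1 (Hdom n1 n2)) HK N) as Hlow.
    cbv beta in Hlow. rewrite theta_term_origin, theta_majorant_origin in Hlow. lra.
  - intro H2.
    pose proof (theta_factor_small (y1 t) H2).
    pose proof (theta_factor_small (y2 t) ltac:(lra)).
    unfold K; nra.
Qed.
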